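(* Let $K$ be a finite subgroup of $U(\mathbb{H})$, $H$ a normal subgroup of $K$, and $L$ a reflection system for $K$ with $H\subseteq L$ and $LH=L$, and suppose $G=G(K,L,H)$ is in canonical form, i.e. $G=G_K(L,H)$. Let $\alpha$ be the automorphism of $K/H$ determined by $\alpha(xH)=x^{-1}H$ for $x\in L$. Then $$G=\Bigl\{\begin{pmatrix}b&0\\0&b_\alpha h\end{pmatrix}\begin{pmatrix}0&1\\1&0\end{pmatrix}^m : b\in K,\ h\in H,\ m\in\{0,1\}\Bigr\},$$ where $b_\alpha$ denotes any element of the coset $\alpha(bH)$ (e.g. $b_\alpha=b^{-1}$ if $b\in L$). Consequently (i) $|G|=2|H||K|$, and (ii) $G$ contains exactly $2|H|+|L|-2$ reflections.
   Context: $\mathbb{H}$ is the real quaternion algebra with basis $1,i,j,k$, and $U(\mathbb{H})$ the group of unit quaternions. For a group $K$ and $a,b\in K$ put $a\circ b:=ab^{-1}a$. A reflection system for a finite group $K$ is a subset $L\subseteq K$ which generates $K$ as a group, is closed under $\circ$, and contains $1$. For $L$ a reflection system and $H\trianglelefteq K$ with $H\subseteq L$, $LH=L$, the map $xH\mapsto x^{-1}H$ ($x\in L$) is well defined and extends to an automorphism $\alpha$ of $K/H$ of order at most $2$. $G(K,L,H)$ denotes the subgroup of the unitary group $U(\mathbb{H}^2)$ of $2\times 2$ quaternionic matrices generated by $\mathrm{diag}(h,1)$, $\mathrm{diag}(1,h)$ for $h\in H$, and $M_b=\begin{pmatrix}0&b\\ b^{-1}&0\end{pmatrix}$ for $b\in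 L$. It is said to be in canonical form, and is then written $G_K(L,H)$, if $\{b\in K: M_b\in G(K,L,H)\}=L$. A reflection is a non-identity element $g\in U(\mathbb{H}^2)$ with $\operatorname{rank}(g-I)=1$. *)

From HB Require Import structures.
From mathcomp Require Import all_boot all_order all_algebra.
From mathcomp Require Import finmap.
From mathcomp Require Import ring lra.
Set Implicit Arguments. Unset Strict Implicit. Unset Printing Implicit Defensive.
Import Order.TTheory GRing.Theory Num.Theory.
Local Open Scope ring_scope.

Section Quat.
Variable R : realFieldType.

Record quat := Quat { q0 : R; q1 : R; q2 : R; q3 : R }.

Definition quat_tuple (q : quat) := (q0 q, q1 q, q2 q, q3 q).
Definition tuple_quat (t : R * R * R * R) := let: (a, b, c, d) := t in Quat a b c d.
Lemma quat_tupleK : cancel quat_tuple tuple_quat. Proof. by case. Qed.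
HB.instance Definition _ := Equality.copy quat (can_type quat_tupleK).
HB.instance Definition _ := Choice.copy quat (can_type quat_tupleK).

Definition qzero := Quat 0 0 0 0.
Definition qadd (x y : quat) := Quat (q0 x + q0 y) (q1 x + q1 y) (q2 x + q2 y) (q3 x + q3 y).
Definition qopp (x : quat) := Quat (- q0 x) (- q1 x) (- q2 x) (- q3 x).

Lemma qaddA : associative qadd.
Proof. by move=> [? ? ? ?] [? ? ? ?] [? ? ? ?]; rewrite /qadd /=; congr Quat; ring. Qed.
Lemma qaddC : commutative qadd.
Proof. by move=> [? ? ? ?] [? ? ? ?]; rewrite /qadd /=; congr Quat; ring. Qed.
Lemma qadd0 : left_id qzero qadd.
Proof. by move=> [? ? ? ?]; rewrite /qadd /=; congr Quat; ring. Qed.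
Lemma qaddN : left_inverse qzero qopp qadd.
Proof. by move=> [? ? ? ?]; rewrite /qadd /=; congr Quat; ring. Qed.

HB.instance Definition _ := GRing.isZmodule.Build quat qaddA qaddC qadd0 qaddN.

Definition qone := Quat 1 0 0 0.
Definition qmul (x y : quat) :=
  Quat (q0 x * q0 y - q1 x * q1 y - q2 x * q2 y - q3 x * q3 y)
       (q0 x * q1 y + q1 x * q0 y + q2 x * q3 y - q3 x * q2 y)
       (q0 x * q2 y - q1 x * q3 y + q2 x * q0 y + q3 x * q1 y)
       (q0 x * q3 y + q1 x * q2 y - q2 x * q1 y + q3 x * q0 y).

Lemma qmulA : associative qmul.
Proof. by move=> [? ? ? ?] [? ? ? ?] [? ? ? ?]; rewrite /qmul /=; congr Quat; ring. Qed.
Lemma qmul1 : left_id qone qmul.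
Proof. by move=> [? ? ? ?]; rewrite /qmul /=; congr Quat; ring. Qed.
Lemma qmulr1 : right_id qone qmul.
Proof. by move=> [? ? ? ?]; rewrite /qmul /=; congr Quat; ring. Qed.
Lemma qmulDl : left_distributive qmul qadd.
Proof. by move=> [? ? ? ?] [? ? ? ?] [? ? ? ?]; rewrite /qmul /= /qadd /=; congr Quat; ring. Qed.
Lemma qmulDr : right_distributive qmul qadd.
Proof. by move=> [? ? ? ?] [? ? ? ?] [? ? ? ?]; rewrite /qmul /= /qadd /=; congr Quat; ring. Qed.
Lemma qone_neq0 : qone != 0 :> quat.
Proof. by apply/eqP => -[] /eqP; rewrite oner_eq0. Qed.

HB.instance Definition _ := GRing.Zmodule_isNzRing.Build quat qmulA qmul1 qmulr1 qmulDl qmulDr qone_neq0.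

Lemma qmulE (x y : quat) : x * y = qmul x y. Proof. by []. Qed.

Definition qconj (x : quat) := Quat (q0 x) (- q1 x) (- q2 x) (- q3 x).
Definition qnorm2 (x : quat) := q0 x ^+ 2 + q1 x ^+ 2 + q2 x ^+ 2 + q3 x ^+ 2.

Definition qunit : pred quat := fun x => qnorm2 x != 0.
Definition qinv (x : quat) :=
  if qnorm2 x != 0 then
    Quat (q0 x / qnorm2 x) (- q1 x / qnorm2 x) (- q2 x / qnorm2 x) (- q3 x / qnorm2 x)
  else x.

Lemma qmulVr : {in qunit, left_inverse 1 qinv *%R}.
Proof.
move=> [a b c d] nz0; have nz : qnorm2 (Quat a b c d) != 0 by exact: nz0.
rewrite /qinv nz qmulE /qmul /=; move: nz; rewrite /qnorm2 /= => nz.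
by congr Quat; field.
Qed.
Lemma qmulrV : {in qunit, right_inverse 1 qinv *%R}.
Proof.
move=> [a b c d] nz0; have nz : qnorm2 (Quat a b c d) != 0 by exact: nz0.
rewrite /qinv nz qmulE /qmul /=; move: nz; rewrite /qnorm2 /= => nz.
by congr Quat; field.
Qed.
Lemma qunitP : forall x y : quat, y * x = 1 /\ x * y = 1 -> qunit x.
Proof.
move=> [a b c d] y [yx _]; apply/negP => /eqP; rewrite /qnorm2 /= => n0.
have a0 : a = 0 by apply/eqP; rewrite -sqrf_eq0; apply/eqP; nra.
have b0 : b = 0 by apply/eqP; rewrite -sqrf_eq0; apply/eqP; nra.
have c0 : c = 0 by apply/eqP; rewrite -sqrf_eq0; apply/eqP; nra.
have d0 : d = 0 by apply/eqP; rewrite -sqrf_eq0; apply/eqP; nra.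
move: yx; rewrite a0 b0 c0 d0 qmulE /qmul /= => -[] /eqP.
by rewrite !mulr0 !subr0 eq_sym oner_eq0.
Qed.
Lemma qinv_out : {in [predC qunit], qinv =1 id}.
Proof. by move=> x; rewrite inE unfold_in /qunit /qinv /= => /negbTE ->. Qed.

HB.instance Definition _ := GRing.NzRing_hasMulInverse.Build quat qmulVr qmulrV qunitP qinv_out.
End Quat.


Section Groups.
Variable T : nzRingType.

Definition is_subgroup (P : T -> Prop) : Prop :=
  [/\ P 1, (forall x y, P x -> P y -> P (x * y)) &
      (forall x, P x -> exists y, [/\ P y, x * y = 1 & y * x = 1])].

Definition gen_subgroup (Amb S : T -> Prop) (g : T) : Prop :=
  forall P : T -> Prop, is_subgroup P -> (forall x, P x -> Amb x) ->
    (forall x, S x -> P x) -> P g.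
End Groups.

Definition has_card (T : choiceType) (P : T -> Prop) (n : nat) : Prop :=
  exists S : {fset T}, (forall x, P x <-> x \in S) /\ #|` S| = n.

Section QuatGroups.
Variable R : realFieldType.
Local Notation H := (quat R).

Definition unit_quat (x : H) : Prop := qnorm2 x = 1.

Definition finite_subgroup_UH (K : {fset H}) : Prop :=
  is_subgroup (fun x => x \in K) /\ {in K, forall x, unit_quat x}.

Definition fset_subgroup (S : {fset H}) : Prop := is_subgroup (fun x => x \in S).

Definition normal_sub (N K : {fset H}) : Prop :=
  [/\ fset_subgroup N, (N `<=` K)%fset & {in K & N, forall x h, x * h * x^-1 \in N}].

Definition circ (a b : H) : H := a * b^-1 * a.

Definition reflection_system (K L : {fset H}) : Prop :=
  [/\ (L `<=` K)%fset,
      (forall x, gen_subgroup unit_quat (fun y => y \in L) x <-> x \in K),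
      {in L &, forall a b, circ a b \in L} & 1 \in L].

Definition lcoset (N : {fset H}) (x : H) : {fset H} := [fset x * h | h in N]%fset.

Definition setmul (L N : {fset H}) : {fset H} := [fset x * h | x in L, h in N]%fset.

(* a : K -> K induces (on cosets) the automorphism alpha of K/N with
   alpha(xN) = x^-1 N for x in L *)
Definition induces_alpha (K L N : {fset H}) (a : H -> H) : Prop :=
  [/\ {in K, forall x, a x \in K},
      {in K &, forall x y, lcoset N x = lcoset N y -> lcoset N (a x) = lcoset N (a y)},
      {in K &, forall x y, lcoset N (a (x * y)) = lcoset N (a x * a y)},
      {in K &, forall x y, lcoset N (a x) = lcoset N (a y) -> lcoset N x = lcoset N y} &
      {in K, forall y, exists2 x, x \in K & lcoset N (a x) = lcoset N y}] /\
  {in L, forall x, lcoset N (a x) = lcoset N x^-1}.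

Definition mx2 (a b c d : H) : 'M[H]_2 :=
  \matrix_(i < 2, j < 2)
    if i == 0 :> nat then (if j == 0 :> nat then a else b)
    else (if j == 0 :> nat then c else d).

Definition Mb (b : H) : 'M[H]_2 := mx2 0 b b^-1 0.
Definition Jmx : 'M[H]_2 := mx2 0 1 1 0.

Definition adjmx (g : 'M[H]_2) : 'M[H]_2 := (map_mx (@qconj R) g)^T.
Definition unitary2 (g : 'M[H]_2) : Prop := g *m adjmx g = 1 /\ adjmx g *m g = 1.

Definition G_gens (L N : {fset H}) (x : 'M[H]_2) : Prop :=
  (exists2 h, h \in N & x = mx2 h 0 0 1) \/
  (exists2 h, h \in N & x = mx2 1 0 0 h) \/
  (exists2 b, b \in L & x = Mb b).

Definition GKLH (L N : {fset H}) : 'M[H]_2 -> Prop :=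
  gen_subgroup unitary2 (G_gens L N).

Definition canonical_form (K L N : {fset H}) : Prop :=
  forall b, b \in K -> (GKLH L N (Mb b) <-> b \in L).

Definition rscale (v : 'cV[H]_2) (l : H) : 'cV[H]_2 := map_mx (fun x => x * l) v.

Definition qspan (n : nat) (us : 'I_n -> 'cV[H]_2) (v : 'cV[H]_2) : Prop :=
  exists lam : 'I_n -> H, v = \sum_(i < n) rscale (us i) (lam i).

Definition spans_image (A : 'M[H]_2) (n : nat) : Prop :=
  exists us : 'I_n -> 'cV[H]_2,
    forall v, (exists w, v = A *m w) <-> qspan us v.
Definition qrank (A : 'M[H]_2) (n : nat) : Prop :=
  spans_image A n /\ forall m, (m < n)%N -> ~ spans_image A m.

Definition reflection (g : 'M[H]_2) : Prop := g != 1 /\ qrank (g - 1) 1.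
End QuatGroups.

From HB Require Import structures.
From mathcomp Require Import all_boot all_order all_algebra finmap.
From mathcomp Require Import reals ring lra zify.
Import GRing.Theory Num.Theory.
Local Open Scope ring_scope.

Set Implicit Arguments. Unset Strict Implicit.

(* Every generator of G(K,L,H) is monomial, diag(b, c) or antidiag(b, c) with b in K
   and c in alpha(bH). Since alpha is a multiplicative involution of K/H (it inverts
   the generating set L), these unitary monomial matrices form a group, which therefore
   contains G. Conversely M_x M_1 = diag(x, x^-1) for x in L, so, K being generated by
   L, every b in K is the corner of some diagonal element of G; multiplying by diag(1, h)
   and by M_1 produces the whole monomial group, of order 2|H||K|.
   For a monomial g, g - 1 has rank one exactly when g = diag(1, h) or diag(h, 1) with
   h in H \ {1}, or g = antidiag(b, b^-1) = M_b; the canonical form puts b in L. *)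

Section FsetCard.
Variables T1 T2 T : choiceType.

Lemma card_in_imfset2 (f : T1 -> T2 -> T) (A : {fset T1}) (B : {fset T2}) :
    (forall x y x' y', x \in A -> y \in B -> x' \in A -> y' \in B ->
       f x y = f x' y' -> x = x' /\ y = y') ->
  #|` [fset f x y | x in A, y in B]%fset| = (#|` A| * #|` B|)%N.
Proof.
move=> f_inj; rewrite (perm_size (enum_imfset2 _ _)) ?size_allpairs //.
move=> [x y] [x' y']; rewrite !inE /= => /andP[xA yB] /andP[x'A y'B].
by move=> /(f_inj _ _ _ _ xA yB x'A y'B) [-> ->].
Qed.

Lemma cardfsU_disjoint (A B : {fset T}) :
  [disjoint A & B]%fset -> #|` (A `|` B)%fset| = (#|` A| + #|` B|)%N.
Proof. by move=> /disjoint_fsetI0 AB0; rewrite cardfsU AB0 cardfs0 subn0. Qed.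
End FsetCard.

Section Subgroup.
Variables (T : nzRingType) (P : T -> Prop).
Hypothesis P_sub : is_subgroup P.

Lemma subgroup1 : P 1. Proof. by case: P_sub. Qed.

Lemma subgroupM x y : P x -> P y -> P (x * y). Proof. by case: P_sub => _ + _; apply. Qed.
End Subgroup.

Section UnitSubgroup.
Variables (T : unitRingType) (P : T -> Prop).
Hypothesis P_sub : is_subgroup P.

Lemma subgroup_unit x : P x -> x \is a GRing.unit.
Proof. by case: P_sub => _ _ /[apply] -[y [_ xy yx]]; apply/unitrP; exists y. Qed.

Lemma subgroupV x : P x -> P x^-1.
Proof.
move=> Px; have [_ _ /(_ x Px) [y [Py xy _]]] := P_sub.
by rewrite -[x^-1]mulr1 -xy mulKr // subgroup_unit.
Qed.
End UnitSubgroup.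

Section GenSubgroup.
Variables (T : nzRingType) (Amb S : T -> Prop).

Lemma gen_subgroup_base x : S x -> gen_subgroup Amb S x.
Proof. by move=> Sx P _ _; apply. Qed.

Lemma gen_subgroup1 : gen_subgroup Amb S 1.
Proof. by move=> P []. Qed.

Lemma gen_subgroupM x y :
  gen_subgroup Amb S x -> gen_subgroup Amb S y -> gen_subgroup Amb S (x * y).
Proof.
move=> Gx Gy P P_sub PA PS.
by apply: (subgroupM P_sub); [apply: Gx | apply: Gy].
Qed.

Lemma gen_subgroup_inv x y :
  gen_subgroup Amb S x -> x * y = 1 -> y * x = 1 -> gen_subgroup Amb S y.
Proof.
move=> Gx xy yx P P_sub PA PS; have [_ _ /(_ x (Gx P P_sub PA PS))] := P_sub.
by case=> z [Pz xz _]; rewrite -[y]mulr1 -xz mulrA yx mul1r.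
Qed.
End GenSubgroup.

Section Quaternion.
Variable R : realFieldType.
Local Notation Q := (quat R).

Lemma qnorm2_eq0 (x : Q) : qnorm2 x = 0 -> x = 0.
Proof.
case: x => a b c d; rewrite /qnorm2 /= => n0.
have sq0 (t : R) : t ^+ 2 = 0 -> t = 0 by move/eqP; rewrite sqrf_eq0 => /eqP.
by congr Quat; apply: sq0; nra.
Qed.

Lemma quat_unit (x : Q) : x != 0 -> x \is a GRing.unit.
Proof. by apply: contra => /eqP/qnorm2_eq0 ->. Qed.

Lemma quat_mul_eq0 (x y : Q) : x * y = 0 -> x = 0 \/ y = 0.
Proof.
have [-> | /quat_unit xU xy0] := eqVneq x 0; first by left.
by right; rewrite -(mulKr xU y) xy0 mulr0.
Qed.

Lemma qconj_norm1 (x : Q) : qnorm2 x = 1 -> x * qconj x = 1 /\ qconj x * x = 1.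
Proof.
by case: x => a b c d; rewrite /qnorm2 /= => n1; split; congr Quat; rewrite -?n1 /=; ring.
Qed.

Lemma qconj0 : qconj (0 : Q) = 0.
Proof. by congr Quat; rewrite /= oppr0. Qed.
End Quaternion.

Section Matrix2.
Variable R : realFieldType.
Local Notation Q := (quat R).
Local Notation M := 'M[Q]_2.

Lemma mx2_inj (p q r s p' q' r' s' : Q) :
  mx2 p q r s = mx2 p' q' r' s' -> [/\ p = p', q = q', r = r' & s = s'].
Proof. by move=> e; split; [move/matrixP/(_ 0 0): e | move/matrixP/(_ 0 1): e
  | move/matrixP/(_ 1 0): e | move/matrixP/(_ 1 1): e]; rewrite !mxE. Qed.

Lemma mx2_mul (p q r s p' q' r' s' : Q) :
  mx2 p q r s * mx2 p' q' r' s' =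
  mx2 (p * p' + q * r') (p * q' + q * s') (r * p' + s * r') (r * q' + s * s').
Proof.
rewrite -mulmxE; apply/matrixP => i j; rewrite !mxE big_ord_recl big_ord1 !mxE /=.
by case: i => [[|[|//]] ?]; case: j => [[|[|//]] ?].
Qed.

Lemma mx2_id : (1 : M) = mx2 1 0 0 1.
Proof.
apply/matrixP => i j; rewrite !mxE.
by case: i => [[|[|//]] ?]; case: j => [[|[|//]] ?].
Qed.

Lemma mx2_sub (p q r s p' q' r' s' : Q) :
  mx2 p q r s - mx2 p' q' r' s' = mx2 (p - p') (q - q') (r - r') (s - s').
Proof.
apply/matrixP => i j; rewrite !mxE.
by case: i => [[|[|//]] ?]; case: j => [[|[|//]] ?].
Qed.

Lemma adjmx_mx2 (p q r s : Q) :
  adjmx (mx2 p q r s) = mx2 (qconj p) (qconj r) (qconj q) (qconj s).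
Proof.
apply/matrixP => i j; rewrite !mxE.
by case: i => [[|[|//]] ?]; case: j => [[|[|//]] ?].
Qed.

Definition col2 (x y : Q) : 'cV[Q]_2 := \col_(i < 2) (if i == 0 :> nat then x else y).

Lemma col2_eta (v : 'cV[Q]_2) : v = col2 (v 0 0) (v 1 0).
Proof.
apply/matrixP => i j; rewrite !mxE (ord1 j).
by case: i => [[|[|//]] ?] /=; congr (v _ _); apply: val_inj.
Qed.

Lemma col2_inj (x y x' y' : Q) : col2 x y = col2 x' y' -> x = x' /\ y = y'.
Proof. by move=> e; split; [move/matrixP/(_ 0 0): e | move/matrixP/(_ 1 0): e]; rewrite !mxE. Qed.

Lemma mx2_mulcol (p q r s x y : Q) :
  mx2 p q r s *m col2 x y = col2 (p * x + q * y) (r * x + s * y).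
Proof.
apply/matrixP => i j; rewrite !mxE big_ord_recl big_ord1 !mxE /=.
by case: i => [[|[|//]] ?].
Qed.

Lemma rscale_col2 (x y l : Q) : rscale (col2 x y) l = col2 (x * l) (y * l).
Proof. by apply/matrixP => i j; rewrite !mxE; case: i => [[|[|//]] ?]. Qed.

Lemma spans_image1_outer (p q r s : Q) : spans_image (mx2 p q r s) 1 ->
  exists u1 u2 l1 l2, [/\ p = u1 * l1, q = u1 * l2, r = u2 * l1 & s = u2 * l2].
Proof.
move=> [us spanP].
have [lam1 e1] : qspan us (col2 p r).
  by apply/spanP; exists (col2 1 0); rewrite mx2_mulcol !mulr1 !mulr0 !addr0.
have [lam2 e2] : qspan us (col2 q s).
  by apply/spanP; exists (col2 0 1); rewrite mx2_mulcol !mulr1 !mulr0 !add0r.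
rewrite big_ord1 (col2_eta (us ord0)) rscale_col2 in e1.
rewrite big_ord1 (col2_eta (us ord0)) rscale_col2 in e2.
by have [-> ->] := col2_inj e1; have [-> ->] := col2_inj e2; do 4 eexists.
Qed.

Lemma qrank_outer (u1 u2 l1 l2 : Q) : (u1 != 0) || (u2 != 0) ->
    l1 \is a GRing.unit \/ l2 \is a GRing.unit ->
  qrank (mx2 (u1 * l1) (u1 * l2) (u2 * l1) (u2 * l2)) 1.
Proof.
move=> u_neq0 lU; split.
  exists (fun _ => col2 u1 u2) => v; split.
    move=> [w ->]; rewrite (col2_eta w) mx2_mulcol.
    by exists (fun _ => l1 * w 0 0 + l2 * w 1 0); rewrite big_ord1 rscale_col2 !mulrDr !mulrA.
  move=> [lam ->]; rewrite big_ord1 rscale_col2.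
  case: lU => lU.
    by exists (col2 (l1^-1 * lam ord0) 0); rewrite mx2_mulcol !mulr0 !addr0 !mulrA !mulrK.
  by exists (col2 0 (l2^-1 * lam ord0)); rewrite mx2_mulcol !mulr0 !add0r !mulrA !mulrK.
case=> // _ [us spanP].
have image0 x y : (exists w, col2 x y = mx2 (u1 * l1) (u1 * l2) (u2 * l1) (u2 * l2) *m w) ->
    x = 0 /\ y = 0.
  move=> /spanP [lam]; rewrite big_ord0 => e.
  by apply: col2_inj; rewrite e; apply/matrixP => i j; rewrite !mxE; case: ifP.
have u0 l : l \is a GRing.unit -> u1 * l = 0 /\ u2 * l = 0 -> False.
  move=> l_unit [/(congr1 (fun z => z * l^-1)) + /(congr1 (fun z => z * l^-1))].
  by rewrite !mulrK // !mul0r => e1 e2; move: u_neq0; rewrite e1 e2 eqxx.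
case: lU => lU; apply: (u0 _ lU); apply: image0.
  by exists (col2 1 0); rewrite mx2_mulcol !mulr0 !addr0 !mulr1.
by exists (col2 0 1); rewrite mx2_mulcol !mulr0 !add0r !mulr1.
Qed.

Lemma reflection_diagP (b c : Q) : reflection (mx2 b 0 0 c) <-> (b == 1) != (c == 1).
Proof.
have [-> | b1] := eqVneq b 1; have [-> | c1] := eqVneq c 1 => /=.
- by split => // -[]; rewrite -mx2_id eqxx.
- split => // _; split.
    by rewrite mx2_id; apply: contra c1 => /eqP /mx2_inj [_ _ _ ->].
  have -> : mx2 1 0 0 c - 1 = mx2 (0 * 0) (0 * (c - 1)) (1 * 0) (1 * (c - 1)) :> M.
    by rewrite mx2_id mx2_sub !subrr !(mul0r, mulr0, mul1r).
  apply: qrank_outer; first by rewrite oner_eq0 orbT.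
  by right; apply: quat_unit; rewrite subr_eq0.
- split => // _; split.
    by rewrite mx2_id; apply: contra b1 => /eqP /mx2_inj [-> _ _ _].
  have -> : mx2 b 0 0 1 - 1 = mx2 (1 * (b - 1)) (1 * 0) (0 * (b - 1)) (0 * 0) :> M.
    by rewrite mx2_id mx2_sub !subrr !(mul0r, mulr0, mul1r).
  apply: qrank_outer; first by rewrite oner_eq0.
  by left; apply: quat_unit; rewrite subr_eq0.
split => // -[_ [+ _]]; rewrite mx2_id mx2_sub !subrr.
case/spans_image1_outer => u1 [u2 [l1 [l2 [e1 e2 _ e4]]]].
have u1_neq0 : u1 != 0 by apply: contraNneq b1 => u1_0; rewrite -subr_eq0 e1 u1_0 mul0r.
have l2_0 : l2 = 0 by case: (quat_mul_eq0 (esym e2)) => // u1_0; rewrite u1_0 eqxx in u1_neq0.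
by move: c1; rewrite -subr_eq0 e4 l2_0 mulr0 eqxx.
Qed.

Lemma reflection_antidiagP (b c : Q) : reflection (mx2 0 b c 0) <-> c * b = 1.
Proof.
split=> [[_ [+ _]] | cb1]; last split.
- rewrite mx2_id mx2_sub !subr0 sub0r.
  case/spans_image1_outer => u1 [u2 [l1 [l2 [e1 -> -> e4]]]].
  have u1U : u1 \is a GRing.unit.
    by apply: quat_unit; apply: contra_eqN e1 => /eqP ->; rewrite mul0r oppr_eq0 oner_eq0.
  have l1u1 : l1 * u1 = -1 by rewrite -[l1](mulKr u1U) -e1 mulrN1 mulNr mulVr.
  by rewrite mulrA -(mulrA u2) l1u1 mulrN1 mulNr -e4 opprK.
- by rewrite mx2_id; apply/eqP => /mx2_inj [/eqP]; rewrite eq_sym oner_eq0.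
have -> : mx2 0 b c 0 - 1 = mx2 (1 * -1) (1 * b) (- c * -1) (- c * b) :> M.
  by rewrite mx2_id mx2_sub !subr0 sub0r mulrNN mulNr cb1 !mulr1 !mul1r.
by apply: qrank_outer; [rewrite oner_eq0 | left; rewrite unitrN unitr1].
Qed.
End Matrix2.

Definition eqmod (R : realFieldType) (H : {fset quat R}) (x y : quat R) := x^-1 * y \in H.

Section Cosets.
Variable R : realFieldType.
Local Notation Q := (quat R).
Variables K H : {fset Q}.
Hypothesis K_sub : fset_subgroup K.
Hypothesis H_normal : normal_sub H K.

Let K1 : 1 \in K := subgroup1 K_sub.
Let KM x y : x \in K -> y \in K -> x * y \in K := @subgroupM _ _ K_sub x y.
Let KV x : x \in K -> x^-1 \in K := @subgroupV _ _ K_sub x.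
Let Kunit x : x \in K -> x \is a GRing.unit := @subgroup_unit _ _ K_sub x.
Let H_sub : fset_subgroup H. Proof. by case: H_normal. Qed.
Let H1 : 1 \in H := subgroup1 H_sub.
Let HM x y : x \in H -> y \in H -> x * y \in H := @subgroupM _ _ H_sub x y.
Let HV x : x \in H -> x^-1 \in H := @subgroupV _ _ H_sub x.
Let HK x : x \in H -> x \in K. Proof. by case: H_normal => _ /fsubsetP HK _; apply: HK. Qed.
Let H_conj x h : x \in K -> h \in H -> x * h * x^-1 \in H.
Proof. by case: H_normal => _ _; apply. Qed.

Lemma eqmod1 h : eqmod H 1 h = (h \in H).
Proof. by rewrite /eqmod invr1 mul1r. Qed.

Lemma eqmod_sym x y : x \in K -> y \in K -> eqmod H x y -> eqmod H y x.
Proof. by move=> xK yK /HV; rewrite invrM ?invrK ?unitrV ?Kunit. Qed.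

Lemma eqmod_trans y x z : y \in K -> eqmod H x y -> eqmod H y z -> eqmod H x z.
Proof. by move=> yK xy yz; rewrite /eqmod -(mulVKr (Kunit yK) z) mulrA HM. Qed.

Lemma eqmod_memK x y : x \in K -> eqmod H x y -> y \in K.
Proof. by move=> xK /HK xyK; rewrite -(mulVKr (Kunit xK) y) KM. Qed.

Lemma eqmodMl z x y : z \in K -> x \in K -> eqmod H x y -> eqmod H (z * x) (z * y).
Proof. by move=> zK xK; rewrite /eqmod invrM ?Kunit // -mulrA mulKr ?Kunit. Qed.

Lemma eqmodMr z x y : z \in K -> x \in K -> eqmod H x y -> eqmod H (x * z) (y * z).
Proof.
move=> zK xK /(H_conj (KV zK)); rewrite invrK /eqmod invrM ?Kunit //.
by rewrite !mulrA.
Qed.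

Lemma eqmodV x y : x \in K -> y \in K -> eqmod H x y -> eqmod H x^-1 y^-1.
Proof.
move=> xK yK /(eqmod_sym xK yK) /(H_conj xK).
by rewrite /eqmod invrK mulrA mulrK ?Kunit.
Qed.

Lemma lcoset_eqmod x y : x \in K -> y \in K -> lcoset H x = lcoset H y <-> eqmod H x y.
Proof.
move=> xK yK; split=> [xHyH | xy].
  have : y \in lcoset H y by apply/imfsetP; exists 1; rewrite ?mulr1.
  by rewrite -xHyH => /imfsetP [h hH ->]; rewrite /eqmod mulKr ?Kunit.
have yx := eqmod_sym xK yK xy.
apply/fsetP => z; apply/imfsetP/imfsetP => -[h hH ->].
  by exists (y^-1 * x * h); [apply: HM | rewrite !mulrA mulrV ?Kunit ?mul1r].
by exists (x^-1 * y * h); [apply: HM | rewrite !mulrA mulrV ?Kunit ?mul1r].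
Qed.

Section AlphaMonomial.
Variables (L : {fset Q}) (a : Q -> Q).
Hypothesis K_unit : {in K, forall x, unit_quat x}.
Hypothesis L_refl : reflection_system K L.
Hypothesis a_alpha : induces_alpha K L H a.

Lemma LK x : x \in L -> x \in K.
Proof. by case: L_refl => /fsubsetP LK _ _ _; apply: LK. Qed.

Lemma K_gen_ind (P : Q -> Prop) : is_subgroup P -> (forall x, P x -> x \in K) ->
  (forall x, x \in L -> P x) -> forall x, x \in K -> P x.
Proof.
move=> P_sub PK LP x; case: L_refl => _ genK _ _ /genK; apply=> // y /PK.
exact: K_unit.
Qed.

Lemma alpha_memK x : x \in K -> a x \in K.
Proof. by case: a_alpha => -[aK _ _ _ _] _; apply: aK. Qed.

Lemma alpha_eqmod x y : x \in K -> y \in K -> eqmod H x y -> eqmod H (a x) (a y).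
Proof.
move=> xK yK /(lcoset_eqmod xK yK); case: a_alpha => -[_ a_wd _ _ _] _.
by move/(a_wd _ _ xK yK)/(lcoset_eqmod (alpha_memK xK) (alpha_memK yK)).
Qed.

Lemma alphaM x y : x \in K -> y \in K -> eqmod H (a (x * y)) (a x * a y).
Proof.
move=> xK yK; case: a_alpha => -[_ _ a_mul _ _] _.
have axyK := alpha_memK (KM xK yK); have axayK := KM (alpha_memK xK) (alpha_memK yK).
by apply/(lcoset_eqmod axyK axayK); apply: a_mul.
Qed.

Lemma alpha_inj x y : x \in K -> y \in K -> eqmod H (a x) (a y) -> eqmod H x y.
Proof.
move=> xK yK /(lcoset_eqmod (alpha_memK xK) (alpha_memK yK)).
by case: a_alpha => -[_ _ _ a_inj _] _ /(a_inj _ _ xK yK)/(lcoset_eqmod xK yK).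
Qed.

Lemma alphaL x : x \in L -> eqmod H (a x) x^-1.
Proof.
move=> xL; have xK := LK xL; case: a_alpha => _ aL.
by apply/lcoset_eqmod; rewrite ?alpha_memK ?KV //; apply: aL.
Qed.

Lemma alpha1 : a 1 \in H.
Proof. by have := alphaM K1 K1; rewrite /eqmod mul1r mulKr ?Kunit ?alpha_memK. Qed.

Lemma eqmod_alpha1 : eqmod H (a 1) 1.
Proof. by apply: eqmod_sym; rewrite ?alpha_memK // eqmod1 alpha1. Qed.

Lemma alphaV x : x \in K -> eqmod H (a x^-1) (a x)^-1.
Proof.
move=> xK; have axV := alphaM xK (KV xK); rewrite mulrV ?Kunit // in axV.
have : eqmod H 1 (a x * a x^-1).
  by apply: eqmod_trans axV; rewrite ?alpha_memK // eqmod1 alpha1.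
by rewrite eqmod1 => /HV; rewrite invrM ?Kunit ?alpha_memK ?KV.
Qed.

Lemma alpha_eqmodV b c : b \in K -> eqmod H (a b) c -> eqmod H (a b^-1) c^-1.
Proof.
move=> bK bc; have cK := eqmod_memK (alpha_memK bK) bc.
by apply: (@eqmod_trans (a b)^-1); rewrite ?KV ?alpha_memK ?alphaV ?eqmodV ?alpha_memK.
Qed.

Lemma alpha_eqmodM b b' c c' : b \in K -> b' \in K ->
  eqmod H (a b) c -> eqmod H (a b') c' -> eqmod H (a (b * b')) (c * c').
Proof.
move=> bK b'K bc b'c'; have c'K := eqmod_memK (alpha_memK b'K) b'c'.
apply: (@eqmod_trans (a b * a b')); rewrite ?KM ?alpha_memK ?alphaM //.
apply: (@eqmod_trans (a b * c')); rewrite ?KM ?alpha_memK ?eqmodMl ?alpha_memK //.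
by rewrite eqmodMr ?alpha_memK.
Qed.

(* alpha inverts L, so this holds on a generating set, and where it holds is a subgroup. *)
Lemma alphaK x : x \in K -> eqmod H (a (a x)) x.
Proof.
pose P y := y \in K /\ eqmod H (a (a y)) y.
suff /(_ x) PK : forall y, y \in K -> P y by move=> /PK [].
apply: (@K_gen_ind P); [split | by move=> y [] | move=> y yL].
- split=> //; apply: (@eqmod_trans (a 1)); rewrite ?alpha_memK ?eqmod_alpha1 //.
  by apply: alpha_eqmod; rewrite ?alpha_memK ?eqmod_alpha1.
- move=> y z [yK yy] [zK zz]; split; first exact: KM.
  apply: (@eqmod_trans (a (a y * a z))); rewrite ?alpha_memK ?KM ?alpha_memK //.
    by apply: alpha_eqmod (alphaM yK zK); rewrite ?alpha_memK ?KM ?alpha_memK.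
  by apply: alpha_eqmodM; rewrite ?alpha_memK.
- move=> y [yK yy]; exists y^-1; split; rewrite ?mulrV ?mulVr ?Kunit //.
  split; first exact: KV.
  apply: (@eqmod_trans (a (a y)^-1)); rewrite ?alpha_memK ?KV ?alpha_memK //.
    by apply: alpha_eqmod (alphaV yK); rewrite ?alpha_memK ?KV ?alpha_memK.
  by apply: alpha_eqmodV; rewrite ?alpha_memK.
- have yK := LK yL; split => //.
  apply: (@eqmod_trans (a y^-1)); rewrite ?alpha_memK ?KV //.
    by apply: alpha_eqmod (alphaL yL); rewrite ?alpha_memK ?KV.
  by rewrite -[X in eqmod _ _ X]invrK; apply: alpha_eqmodV (alphaL yL).
Qed.

Lemma alpha_eqmod_swap b c : b \in K -> eqmod H (a b) c -> eqmod H (a c) b.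
Proof.
move=> bK bc; have cK := eqmod_memK (alpha_memK bK) bc.
apply: (@eqmod_trans (a (a b))); rewrite ?alpha_memK ?alphaK //.
by apply: alpha_eqmod; rewrite ?alpha_memK // eqmod_sym ?alpha_memK.
Qed.

Definition alpha_monomial (g : 'M[Q]_2) : Prop :=
  exists b c, [/\ b \in K, eqmod H (a b) c & g = mx2 b 0 0 c \/ g = mx2 0 b c 0].

Lemma alpha_monomial_subgroup : is_subgroup alpha_monomial.
Proof.
split.
- exists 1, 1; split; rewrite ?mx2_id; [exact: K1 | exact: eqmod_alpha1 | by left].
- move=> g g' [b [c [bK bc eg]]] [b' [c' [b'K b'c' eg']]].
  have cK := eqmod_memK (alpha_memK bK) bc; have c'K := eqmod_memK (alpha_memK b'K) b'c'.
  have c'b' := alpha_eqmod_swap b'K b'c'.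
  case: eg eg' => -> [] ->; rewrite mx2_mul !(mul0r, mulr0, addr0, add0r).
  + by exists (b * b'), (c * c'); split; [exact: KM | exact: alpha_eqmodM | left].
  + by exists (b * b'), (c * c'); split; [exact: KM | exact: alpha_eqmodM | right].
  + by exists (b * c'), (c * b'); split; [exact: KM | exact: alpha_eqmodM | right].
  + by exists (b * c'), (c * b'); split; [exact: KM | exact: alpha_eqmodM | left].
- move=> g [b [c [bK bc eg]]]; have cK := eqmod_memK (alpha_memK bK) bc.
  case: eg => ->.
    exists (mx2 b^-1 0 0 c^-1); split.
    + by exists b^-1, c^-1; split; [exact: KV | exact: alpha_eqmodV | left].
    + by rewrite mx2_mul !(mul0r, mulr0, addr0, add0r) !mulrV ?Kunit // -mx2_id.
    + by rewrite mx2_mul !(mul0r, mulr0, addr0, add0r) !mulVr ?Kunit // -mx2_id.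
  exists (mx2 0 c^-1 b^-1 0); split.
  + exists c^-1, b^-1; split; [exact: KV | | by right].
    exact/alpha_eqmodV/alpha_eqmod_swap.
  + by rewrite mx2_mul !(mul0r, mulr0, addr0, add0r) !mulrV ?Kunit // -mx2_id.
  + by rewrite mx2_mul !(mul0r, mulr0, addr0, add0r) !mulVr ?Kunit // -mx2_id.
Qed.

Lemma alpha_monomial_unitary g : alpha_monomial g -> unitary2 g.
Proof.
move=> [b [c [bK bc eg]]]; have cK := eqmod_memK (alpha_memK bK) bc.
have [b_bc bc_b] := qconj_norm1 (K_unit bK); have [c_cc cc_c] := qconj_norm1 (K_unit cK).
by rewrite /unitary2; case: eg => ->; rewrite adjmx_mx2 !qconj0 !mulmxE !mx2_mul
  !(mul0r, mulr0, addr0, add0r) b_bc bc_b c_cc cc_c -mx2_id.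
Qed.

Lemma G_gens_alpha_monomial g : G_gens L H g -> alpha_monomial g.
Proof.
case=> [[h hH ->] | [[h hH ->] | [b bL ->]]].
- exists h, 1; split; [exact: HK | | by left].
  apply: (@eqmod_trans (a 1)); rewrite ?alpha_memK ?eqmod_alpha1 //.
  by apply: alpha_eqmod; rewrite ?HK // eqmod_sym ?HK ?eqmod1.
- exists 1, h; split; [exact: K1 | | by left].
  by apply: (@eqmod_trans 1); rewrite ?eqmod_alpha1 ?eqmod1.
- by exists b, b^-1; split; [exact: LK | exact: alphaL | right].
Qed.

Lemma GKLH_alpha_monomial g : GKLH L H g -> alpha_monomial g.
Proof.
by apply; [exact: alpha_monomial_subgroup | exact: alpha_monomial_unitary
  | exact: G_gens_alpha_monomial].
Qed.

Lemma alpha_monomial_diag x c : x \in K -> alpha_monomial (mx2 x 0 0 c) -> eqmod H (a x) c.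
Proof.
move=> xK [b [c' [_ bc' [/mx2_inj [-> _ _ -> //] | /mx2_inj [x0 _ _ _]]]]].
by move: (Kunit xK); rewrite x0 unitr0.
Qed.

Lemma GKLH_Mb b : b \in L -> GKLH L H (Mb b).
Proof. by move=> bL; apply: gen_subgroup_base; right; right; exists b. Qed.

Lemma GKLH_diag1 h : h \in H -> GKLH L H (mx2 1 0 0 h).
Proof. by move=> hH; apply: gen_subgroup_base; right; left; exists h. Qed.

Lemma GKLH_diag2 h : h \in H -> GKLH L H (mx2 h 0 0 1).
Proof. by move=> hH; apply: gen_subgroup_base; left; exists h. Qed.

Lemma L1 : 1 \in L. Proof. by case: L_refl. Qed.

Lemma GKLH_MbM1 b : b \in L -> GKLH L H (mx2 b 0 0 b^-1).
Proof.
move=> bL; have := gen_subgroupM (GKLH_Mb bL) (GKLH_Mb L1).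
by rewrite /Mb mx2_mul invr1 !(mul0r, mulr0, addr0, add0r) !mulr1.
Qed.

Lemma GKLH_diag x : x \in K -> exists c, GKLH L H (mx2 x 0 0 c).
Proof.
pose P y := y \in K /\ exists c, GKLH L H (mx2 y 0 0 c).
suff /(_ x) PK : forall y, y \in K -> P y by move=> /PK [].
apply: (@K_gen_ind P); [split | by move=> y [] | move=> y yL].
- by split; [exact: K1 | exists 1; rewrite -mx2_id; exact: gen_subgroup1].
- move=> y z [yK [c Gc]] [zK [d Gd]]; split; first exact: KM.
  exists (c * d); have := gen_subgroupM Gc Gd.
  by rewrite mx2_mul !(mul0r, mulr0, addr0, add0r).
- move=> y [yK [c Gc]]; exists y^-1; split; rewrite ?mulrV ?mulVr ?Kunit //.
  split; first exact: KV.
  have cK := eqmod_memK (alpha_memK yK) (alpha_monomial_diag yK (GKLH_alpha_monomial Gc)).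
  exists c^-1; apply: (gen_subgroup_inv Gc);
    by rewrite mx2_mul !(mul0r, mulr0, addr0, add0r) ?mulrV ?mulVr ?Kunit // -mx2_id.
- by split; [exact: LK | exists y^-1; exact: GKLH_MbM1].
Qed.

Lemma alpha_monomial_GKLH g : alpha_monomial g -> GKLH L H g.
Proof.
move=> [b [c [bK bc eg]]]; have [c0 Gc0] := GKLH_diag bK.
have bc0 := alpha_monomial_diag bK (GKLH_alpha_monomial Gc0).
have c0K := eqmod_memK (alpha_memK bK) bc0.
have c0c : eqmod H c0 c.
  by apply: (@eqmod_trans (a b)); rewrite ?alpha_memK // eqmod_sym ?alpha_memK.
have Gbc : GKLH L H (mx2 b 0 0 c).
  have := gen_subgroupM Gc0 (GKLH_diag1 c0c).
  by rewrite mx2_mul !(mul0r, mulr0, addr0, add0r) mulr1 mulVKr ?Kunit.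
case: eg => -> //; have := gen_subgroupM Gbc (GKLH_Mb L1).
by rewrite /Mb mx2_mul invr1 !(mul0r, mulr0, addr0, add0r) !mulr1.
Qed.

Lemma GKLHP g : GKLH L H g <-> alpha_monomial g.
Proof. by split; [exact: GKLH_alpha_monomial | exact: alpha_monomial_GKLH]. Qed.

Lemma GKLH_normal_form g : GKLH L H g <->
  exists b h (m : nat), [/\ b \in K, h \in H, (m <= 1)%N &
    g = mx2 b 0 0 (a b * h) *m Jmx R ^+ m].
Proof.
apply: iff_trans (GKLHP g) _; split.
  move=> [b [c [bK bc eg]]]; have abU := Kunit (alpha_memK bK).
  exists b, ((a b)^-1 * c); case: eg => ->.
    by exists 0%N; rewrite mulVKr // expr0 mulmx1.
  exists 1%N; rewrite mulVKr // expr1 mulmxE /Jmx mx2_mul.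
  by rewrite !(mul0r, mulr0, addr0, add0r) !mulr1.
move=> [b [h [m [bK hH m1 ->]]]]; exists b, (a b * h).
split=> //; first by rewrite /eqmod mulKr ?Kunit ?alpha_memK.
case: m m1 => [|[|//]] _; first by left; rewrite expr0 mulmx1.
by right; rewrite expr1 mulmxE /Jmx mx2_mul !(mul0r, mulr0, addr0, add0r) !mulr1.
Qed.

Lemma card_GKLH : has_card (GKLH L H) (2 * #|` H| * #|` K|).
Proof.
pose D := [fset mx2 b 0 0 (a b * h) | b in K, h in H]%fset.
pose A := [fset mx2 0 b (a b * h) 0 | b in K, h in H]%fset.
have ab_inj b h h' : b \in K -> a b * h = a b * h' -> h = h'.
  by move=> bK; apply: mulrI; rewrite Kunit ?alpha_memK.
exists (D `|` A)%fset; split.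
  move=> g; apply: iff_trans (GKLHP g) _; split.
    move=> [b [c [bK bc eg]]]; have abU := Kunit (alpha_memK bK).
    by apply/fsetUP; case: eg => ->; [left | right]; apply/imfset2P; exists b => //;
      exists ((a b)^-1 * c); rewrite ?mulVKr.
  by move=> /fsetUP [] /imfset2P [b bK [h hH ->]]; exists b, (a b * h);
    split; rewrite /eqmod ?mulKr ?Kunit ?alpha_memK //; [left | right].
rewrite cardfsU_disjoint ?card_in_imfset2.
- by rewrite addnn -mul2n mulnA mulnAC.
- by move=> b h b' h' bK _ _ _ /mx2_inj [_ eb ec _]; subst b'; split; last exact: ab_inj ec.
- by move=> b h b' h' bK _ _ _ /mx2_inj [eb _ _ ec]; subst b'; split; last exact: ab_inj ec.
apply/fdisjointP => g /imfset2P [b bK [h _ ->]].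
apply/negP => /imfset2P [b' _ [h' _ /mx2_inj [b0 _ _ _]]].
by move: (Kunit bK); rewrite b0 unitr0.
Qed.

Section CanonicalForm.
Hypothesis L_can : canonical_form K L H.

Lemma GKLH_reflectionP g : GKLH L H g /\ reflection g <->
  [\/ exists2 h, h \in (H `\ 1)%fset & g = mx2 1 0 0 h,
      exists2 h, h \in (H `\ 1)%fset & g = mx2 h 0 0 1 |
      exists2 b, b \in L & g = Mb b].
Proof.
split=> [[/GKLH_alpha_monomial [b [c [bK bc [eg | eg]]]]] | ].
- rewrite eg reflection_diagP.
  have [b1 | b1] := eqVneq b 1; have [c1 | c1] := eqVneq c 1 => //= _.
    subst b; apply: Or31; exists c => //; rewrite in_fsetD1 c1 -eqmod1.
    by apply: (eqmod_trans (alpha_memK K1) _ bc); rewrite eqmod1 alpha1.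
  subst c; apply: Or32; exists b => //; rewrite in_fsetD1 b1 -eqmod1.
  apply: alpha_inj => //.
  by apply: (eqmod_trans K1 eqmod_alpha1); rewrite eqmod_sym ?alpha_memK.
- rewrite eg reflection_antidiagP => cb1.
  have ec : c = b^-1 by rewrite -[c](mulrK (Kunit bK)) cb1 mul1r.
  apply: Or33; exists b; rewrite /Mb -?ec //; apply/(L_can bK); apply: alpha_monomial_GKLH.
  by exists b, c; split=> //; right; rewrite ec.
case=> [[h + ->] | [h + ->] | [b bL ->]]; rewrite ?in_fsetD1.
- move=> /andP [h1 hH]; split; first exact: GKLH_diag1.
  by rewrite reflection_diagP eqxx (negbTE h1).
- move=> /andP [h1 hH]; split; first exact: GKLH_diag2.
  by rewrite reflection_diagP eqxx (negbTE h1).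
- by split; [exact: GKLH_Mb | rewrite /Mb reflection_antidiagP mulVr ?Kunit ?LK].
Qed.

Lemma card_GKLH_reflections :
  has_card (fun g => GKLH L H g /\ reflection g) (2 * #|` H| + #|` L| - 2).
Proof.
set H' := (H `\ 1)%fset.
pose D1 := [fset mx2 1 0 0 h | h in H']%fset.
pose D2 := [fset mx2 h 0 0 1 | h in H']%fset.
pose A := [fset Mb b | b in L]%fset.
exists (D1 `|` D2 `|` A)%fset; split.
  move=> g; apply: iff_trans (GKLH_reflectionP g) _; split.
    case=> [[h hH ->] | [h hH ->] | [b bL ->]]; apply/fsetUP.
    - by left; apply/fsetUP; left; apply/imfsetP; exists h.
    - by left; apply/fsetUP; right; apply/imfsetP; exists h.
    - by right; apply/imfsetP; exists b.
  by move=> /fsetUP [/fsetUP [] |] /imfsetP [x xH ->]; [apply: Or31 | apply: Or32 | apply: Or33];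
    exists x.
have H'_neq0 h : h \in H' -> h != 0.
  by rewrite in_fsetD1 => /andP [_ /HK /Kunit]; apply: contraTneq => ->; rewrite unitr0.
have [cD1 cD2 cA] : [/\ #|` D1| = #|` H'|, #|` D2| = #|` H'| & #|` A| = #|` L|].
  by split; rewrite card_in_imfset // => x y _ _ /mx2_inj [].
rewrite !cardfsU_disjoint ?cD1 ?cD2 ?cA.
- (* stated apart: the two occurrences of #|` H'| carry different choice instances *)
  have count n l : (n + n + l = 2 * (true + n) + l - 2)%N by lia.
  by rewrite (cardfsD1 1 H) H1; apply: count.
- apply/fdisjointP => g /imfsetP [h hH' ->].
  apply/negP => /imfsetP [h' hH'' /mx2_inj [h'1 _ _ _]].
  by move: hH''; rewrite -h'1 in_fsetD1 eqxx.
apply/fdisjointP => g /fsetUP [] /imfsetP [h hH' ->]; apply/negP => /imfsetP [b _];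
  move=> /mx2_inj [h0 _ _ _]; first by move/eqP: h0; rewrite oner_eq0.
by move: (H'_neq0 _ hH'); rewrite h0 eqxx.
Qed.
End CanonicalForm.
End AlphaMonomial.
End Cosets.

Theorem lemma2p5 (R : realType) (K L H : {fset quat R}) (a : quat R -> quat R) :
  finite_subgroup_UH K ->
  normal_sub H K ->
  reflection_system K L ->
  (H `<=` L)%fset ->
  setmul L H = L ->
  canonical_form K L H ->
  induces_alpha K L H a ->
  [/\ (forall g : 'M[quat R]_2, GKLH L H g <->
         exists b h (m : nat), [/\ b \in K, h \in H, (m <= 1)%N &
           g = mx2 b 0 0 (a b * h) *m Jmx R ^+ m]),
      has_card (GKLH L H) (2 * #|` H| * #|` K|) &
      has_card (fun g => GKLH L H g /\ reflection g) (2 * #|` H| + #|` L| - 2)].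
Proof.
(* H <= L and LH = L are what make alpha well defined; it comes here with
   that property already, through induces_alpha. *)
move=> [K_sub K_unit] H_normal L_refl _ _ L_can a_alpha; split.
- by move=> g; apply: (GKLH_normal_form K_sub H_normal K_unit L_refl a_alpha).
- exact: (card_GKLH K_sub H_normal K_unit L_refl a_alpha).
- exact: (card_GKLH_reflections K_sub H_normal K_unit L_refl a_alpha L_can).
Qed.
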